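(* Consider the normalised two-player, two-market Cournot game with per-period utility $u(x,a)=-2x(x+a)$ for a player playing $x$ against an opponent playing $a$. Let $c=-\frac{1}{1+\sqrt2}$ and let player 2's initial strategy be $a_0\in[-1,1]$. The players update alternately, each responding to the opponent's current strategy $a$ by switching to $c\,a$: at time $t=0$ player 1 updates (to $c\,a_0$), at $t=1$ player 2 updates (to $c^2a_0$), at $t=2$ player 1 updates, and so on. Let $u_t$ denote player 1's one-period utility at time $t$, evaluated at both players' strategies after the update at time $t$, and let $g=u_0=u(c\,a_0,a_0)$ be player 1's utility after the first move, measured relative to the equilibrium utility $0$. Then $$\sum_{t=0}^{\infty}u_t=\frac{(1+\sqrt2)\,g}{4},$$ which is strictly positive whenever $a_0\neq 0$.
   Context: Two players each have one unit of a homogeneous good (zero production and transportation cost) to split between two markets with inverse-linear demand. Strategies are normalised to numbers in $[-1,1]$ with $0$ the unique Cournot equilibrium split, and the normalised one-period utility (relative to the equilibrium utility, normalised to $0$) of a player playing $x$ against an opponent playing $a$ is $u(x,a)=-2x(x+a)$. The response rule $a\mapsto -\frac{a}{1+\sqrt2}$ is the one the paper calls the infinite time horizon optimal strategy. *)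

From Stdlib Require Import Reals Lra.
From Coquelicot Require Import Coquelicot.
Open Scope R_scope.

Definition u (x a : R) : R := -2 * x * (x + a).

(* Response coefficient of the infinite-horizon optimal strategy a |-> -a/(1+sqrt 2). *)
Definition c : R := - / (1 + sqrt 2).

(* Strategies (player 1, player 2) after the update at time t. *)
Fixpoint state (a0 : R) (t : nat) : R * R :=
  match t with
  | O => (c * a0, a0)
  | S n =>
      let p := state a0 n in
      if Nat.even (S n) then (c * snd p, snd p) else (fst p, c * fst p)
  end.

Definition util (a0 : R) (t : nat) : R := u (fst (state a0 t)) (snd (state a0 t)).

Definition gain (a0 : R) : R := u (c * a0) a0.

From Stdlib Require Import Reals Lra.
From Coquelicot Require Import Coquelicot.
Open Scope R_scope.

(** After every move the mover's strategy is [c] times the opponent's, so two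
    consecutive moves rescale both strategies by [c^2]; since [u] is quadratic,
    the utility sequence satisfies [u_(t+2) = c^4 u_t], with [u_1 = c u_0 = c g].
    Such a sequence is a combination of the geometric sequences [(c^2)^t] and
    [(-c^2)^t], and sums to [(1 + c) g / (1 - c^4)].  Since [c] is the root
    [1 - sqrt 2] of [x^2 = 2x + 1], this equals [-g / (4c) = (1 + sqrt 2) g / 4]. *)

Lemma is_series_two_step_geom (q : R) (a : nat -> R) :
  q <> 0 -> Rabs q < 1 ->
  (forall n, a (S (S n)) = q ^ 2 * a n) ->
  is_series a ((a O + a 1%nat) / (1 - q ^ 2)).
Proof.
  intros Hq0 Hq Hrec.
  set (alpha := (a O + a 1%nat / q) / 2).
  set (beta := (a O - a 1%nat / q) / 2).
  assert (Hclosed : forall n, a n = alpha * q ^ n + beta * (- q) ^ n).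
  { assert (Hstep : forall n, a n = alpha * q ^ n + beta * (- q) ^ n /\
                           a (S n) = alpha * q ^ S n + beta * (- q) ^ S n).
    { induction n as [|n [IH0 IH1]].
      - split; unfold alpha, beta; simpl; field; exact Hq0.
      - split; [exact IH1|]. rewrite Hrec, IH0. simpl. ring. }
    intro n; apply Hstep. }
  assert (Hmq : Rabs (- q) < 1) by (rewrite Rabs_Ropp; exact Hq).
  pose proof (is_series_plus _ _ _ _
    (is_series_scal_l alpha _ _ (is_series_geom q Hq))
    (is_series_scal_l beta _ _ (is_series_geom (- q) Hmq))) as Hsum.
  apply Rabs_def2 in Hq as [Hq1 Hq2].
  replace ((a O + a 1%nat) / (1 - q ^ 2))
    with (alpha * / (1 - q) + beta * / (1 - - q))
    by (unfold alpha, beta; field; repeat split; try exact Hq0; nra).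
  apply (is_series_ext _ _ _ (fun n => eq_sym (Hclosed n))), Hsum.
Qed.

Lemma sqrt2_pos : 0 < sqrt 2.
Proof. apply sqrt_lt_R0; lra. Qed.

Lemma c_inv : 1 + sqrt 2 = - / c.
Proof. pose proof sqrt2_pos. unfold c. field. lra. Qed.

Lemma c_neg : c < 0.
Proof.
  pose proof sqrt2_pos. unfold c.
  apply Ropp_lt_gt_0_contravar, Rinv_0_lt_compat; lra.
Qed.

Lemma c_gt_m1 : -1 < c.
Proof.
  pose proof sqrt2_pos. unfold c.
  assert (H1 : / (1 + sqrt 2) < / 1) by (apply Rinv_lt_contravar; lra).
  rewrite Rinv_1 in H1. lra.
Qed.

Lemma c_sq : c ^ 2 = 2 * c + 1.
Proof.
  pose proof c_neg.
  assert (Hs : sqrt 2 * sqrt 2 = 2) by (apply sqrt_sqrt; lra).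
  assert (Hc : c * (1 + sqrt 2) = - 1) by (rewrite c_inv; field; lra).
  nra.
Qed.

Lemma u_scale (k x y : R) : u (k * x) (k * y) = k ^ 2 * u x y.
Proof. unfold u. ring. Qed.

Lemma state_response (a0 : R) (n : nat) :
  if Nat.even n then fst (state a0 n) = c * snd (state a0 n)
  else snd (state a0 n) = c * fst (state a0 n).
Proof.
  destruct n as [|n]; [reflexivity|].
  cbn [state]. destruct (Nat.even (S n)); reflexivity.
Qed.

Lemma state_SS (a0 : R) (n : nat) :
  state a0 (S (S n)) = (c ^ 2 * fst (state a0 n), c ^ 2 * snd (state a0 n)).
Proof.
  pose proof (state_response a0 n) as Hresp.
  assert (HS : Nat.even (S n) = negb (Nat.even n))
    by (rewrite Nat.even_succ, <- Nat.negb_even; reflexivity).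
  cbn [state]. change (Nat.even (S (S n))) with (Nat.even n).
  rewrite HS. destruct (Nat.even n); cbn [negb fst snd];
    rewrite Hresp; f_equal; ring.
Qed.

Lemma util_SS (a0 : R) (n : nat) :
  util a0 (S (S n)) = (c ^ 2) ^ 2 * util a0 n.
Proof. unfold util. rewrite state_SS. cbn [fst snd]. rewrite u_scale. ring. Qed.

Lemma util_1 (a0 : R) : util a0 1 = c * gain a0.
Proof. unfold util, gain, u. simpl. ring. Qed.

Lemma gain_pos (a0 : R) : a0 <> 0 -> 0 < gain a0.
Proof.
  intro Ha0. pose proof c_neg. pose proof c_gt_m1.
  assert (Hsq : 0 < a0 ^ 2) by (apply pow2_gt_0; exact Ha0).
  replace (gain a0) with ((- c) * (2 * (1 + c)) * a0 ^ 2) by (unfold gain, u; ring).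
  apply Rmult_lt_0_compat; [apply Rmult_lt_0_compat|]; lra.
Qed.

Lemma geom_two_step_factor : (1 + c) / (1 - (c ^ 2) ^ 2) = (1 + sqrt 2) / 4.
Proof.
  pose proof c_neg. pose proof c_gt_m1.
  rewrite c_inv, c_sq. field. split; nra.
Qed.

Theorem theorem5 (a0 : R) (ha0 : -1 <= a0 <= 1) :
  gain a0 = util a0 0 /\
  is_series (util a0) ((1 + sqrt 2) * gain a0 / 4) /\
  (a0 <> 0 -> 0 < (1 + sqrt 2) * gain a0 / 4).
Proof.
  pose proof c_neg. pose proof c_gt_m1. pose proof sqrt2_pos.
  assert (Hq0 : 0 < c ^ 2) by nra.
  assert (Hq1 : c ^ 2 < 1) by nra.
  split; [reflexivity|]. split.
  - replace ((1 + sqrt 2) * gain a0 / 4)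
      with ((util a0 0 + util a0 1) / (1 - (c ^ 2) ^ 2)).
    + apply is_series_two_step_geom;
        [lra | rewrite Rabs_right; lra | apply util_SS].
    + rewrite util_1. change (util a0 0) with (gain a0).
      replace ((1 + sqrt 2) * gain a0 / 4) with ((1 + sqrt 2) / 4 * gain a0) by field.
      rewrite <- geom_two_step_factor. field. nra.
  - intro Ha0. pose proof (gain_pos a0 Ha0). nra.
Qed.
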